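(* Let $\mathcal{H}$ be a hierarchical generator with lineage $\mathcal{L}$. Among all absorbing hierarchical generators $\mathcal{H}_*$ whose lineage $\mathcal{L}_*$ contains $\mathcal{L}$, there is a least one $\tilde{\mathcal{H}}$, with lineage $\tilde{\mathcal{L}}$, in the sense that $\tilde{\mathcal{L}}\subset\mathcal{L}_*$ for every such $\mathcal{H}_*$. Moreover, with $\mathcal{R}=\tilde{\mathcal{L}}\setminus\mathcal{L}$: (i) every $\psi\in\mathcal{R}$ satisfies $\mathbb{I}(\psi)\subset\mathbb{I}(\mathcal{L}^{\ell_\psi})$; (ii) $\mathrm{depth}(\tilde{\mathcal{L}})=\mathrm{depth}(\mathcal{L})$; (iii) for every $\psi\in\mathcal{R}$ there is $k>0$ with $\mathcal{O}(\psi,k,\mathcal{H})\neq\emptyset$.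
   Context: Fix integers $d\ge1$, $n\ge2$, $m\ge2$; $s=n-1$, $p=m-1$. B-splines $\varphi^\ell_{\vec i}(\vec x)=\prod_kQ(n^\ell x_k-i_k)$ for $\ell\ge0$, $\vec i\in\mathbb{Z}^d$, $Q$ the uniform B-spline of order $m$ with knots $0,\dots,m$; $\mathfrak{B}$ the set of all of them, $\ell_\varphi$ the level; $\mathcal{B}^0=\{\varphi^0_{\vec i}:\vec i\in[-p:0]^d\}$. Children $\mathrm{ch}(\varphi^\ell_{\vec i})=\{\varphi^{\ell+1}_{\vec k}:n\vec i\le\vec k\le n\vec i+sm\}$, extended to sets by union. Cells $I^\ell_{\vec i}=\prod_k[i_kn^{-\ell},(i_k+1)n^{-\ell})$, cell children $\mathrm{ch}(I^\ell_{\vec i})=\{I^{\ell+1}_{\vec k}:n\vec i\le\vec k\le n\vec i+s\}$, $\mathrm{ch}^k$ iterated, $\mathrm{ch}^{-k}(I)=\{J:I\in\mathrm{ch}^k(J)\}$. Cell support $\mathbb{I}(\varphi^\ell_{\vec i})=\{I^\ell_{\vec k}:\vec i\le\vec k\le\vec i+p\}$, $\mathbb{I}^k(\varphi)=\mathrm{ch}^k(\mathbb{I}(\varphi))$ for $k\in\mathbb{Z}$, $\mathbb{B}^k(I)=\{\varphi\in\mathfrak{B}:I\in\mathbb{I}^{-k}(\varphi)\}$, all extended to sets by union; $\mathcal{O}(\psi,k,\mathcal{H})=\mathbb{B}^k(\mathbb{I}(\psi))\cap\mathcal{H}$. A lineage is a finite $\mathcal{L}\subset\mathfrak{B}$ with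 $\mathcal{L}\subset\mathcal{B}^0\cup\mathrm{ch}(\mathcal{L})$; its hierarchical generator is $\mathcal{H}=(\mathcal{B}^0\cup\mathrm{ch}(\mathcal{L}))\setminus\mathcal{L}$ (the lineage is uniquely determined by the generator). $\mathcal{L}^\ell$ is the set of level-$\ell$ elements of $\mathcal{L}$, and $\mathrm{depth}(\mathcal{L})=\min\{\ell:\mathcal{L}^\ell=\emptyset\}$. $\mathcal{H}$ is absorbing if there is no $\varphi\in\mathcal{H}$ with $\mathbb{I}(\varphi)\subset\mathbb{I}(\mathcal{L})$. *)

From mathcomp Require Import all_boot all_order all_algebra.
Set Implicit Arguments. Unset Strict Implicit. Unset Printing Implicit Defensive.
Import Order.TTheory GRing.Theory Num.Theory.

(* A B-spline phi^l_i (resp. a cell I^l_i) is identified with its pair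
   (level l, index vector i in Z^d).  Sets are predicates. *)
Definition idx (d : nat) := {ffun 'I_d -> int}.
Definition bspline (d : nat) := (nat * idx d)%type.
Definition cell (d : nat) := (nat * idx d)%type.
Definition bset (d : nat) := bspline d -> Prop.
Definition cset (d : nat) := cell d -> Prop.

Definition level {d} (phi : bspline d) : nat := phi.1.

Local Open Scope ring_scope.

Definition finite_set {d} (S : bset d) : Prop :=
  exists s : seq (bspline d), forall x, S x -> x \in s.

Definition subset_b {d} (A B : bset d) : Prop := forall x, A x -> B x.
Definition subset_c {d} (A B : cset d) : Prop := forall x, A x -> B x.

Definition B0 {d} (m : nat) : bset d := fun phi =>
  phi.1 = 0%N /\ forall j, - (m.-1)%:Z <= phi.2 j <= 0.

Definition bchild {d} (n m : nat) (phi psi : bspline d) : Prop :=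
  psi.1 = phi.1.+1 /\
  forall j, n%:Z * phi.2 j <= psi.2 j <= n%:Z * phi.2 j + (n.-1 * m)%N%:Z.

Definition chB {d} (n m : nat) (S : bset d) : bset d :=
  fun psi => exists2 phi, S phi & bchild n m phi psi.

Definition cchild {d} (n : nat) (I J : cell d) : Prop :=
  J.1 = I.1.+1 /\
  forall j, n%:Z * I.2 j <= J.2 j <= n%:Z * I.2 j + (n.-1)%:Z.

Fixpoint chk {d} (n : nat) (k : nat) (I J : cell d) : Prop :=
  match k with
  | 0%N => J = I
  | k'.+1 => exists2 I', cchild n I I' & chk n k' I' J
  end.

Definition supp {d} (m : nat) (phi : bspline d) : cset d := fun I =>
  I.1 = phi.1 /\ forall j, phi.2 j <= I.2 j <= phi.2 j + (m.-1)%:Z.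

Definition suppS {d} (m : nat) (S : bset d) : cset d :=
  fun I => exists2 phi, S phi & supp m phi I.

Definition chZ {d} (n : nat) (k : int) (A : cset d) : cset d := fun J =>
  exists2 I, A I &
    match k with
    | Posz k' => chk n k' I J
    | Negz k' => chk n k'.+1 J I
    end.

Definition suppk {d} (n m : nat) (k : int) (phi : bspline d) : cset d :=
  chZ n k (supp m phi).

Definition Bk {d} (n m : nat) (k : int) (A : cset d) : bset d :=
  fun phi => exists2 I, A I & suppk n m (- k) phi I.

Definition Ov {d} (n m : nat) (psi : bspline d) (k : int) (H : bset d) : bset d :=
  fun phi => Bk n m k (supp m psi) phi /\ H phi.

Definition lineage {d} (n m : nat) (L : bset d) : Prop :=
  finite_set L /\ forall phi, L phi -> B0 m phi \/ chB n m L phi.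

(* hierarchical generator of a lineage: (B^0 \cup ch(L)) \ L *)
Definition gen {d} (n m : nat) (L : bset d) : bset d :=
  fun phi => (B0 m phi \/ chB n m L phi) /\ ~ L phi.

(* the generator of L is absorbing *)
Definition absorbing {d} (n m : nat) (L : bset d) : Prop :=
  ~ exists phi, gen n m L phi /\ subset_c (supp m phi) (suppS m L).

Definition at_level {d} (L : bset d) (l : nat) : bset d :=
  fun phi => L phi /\ level phi = l.

Definition is_depth {d} (L : bset d) (D : nat) : Prop :=
  (forall phi, ~ at_level L D phi) /\
  (forall l, (l < D)%N -> exists phi, at_level L l phi).

From mathcomp Require Import all_boot all_order all_algebra.
From mathcomp Require Import zify.
From Stdlib Require Import Classical.
Import Order.TTheory GRing.Theory Num.Theory.
Local Open Scope ring_scope.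

Set Implicit Arguments.
Unset Strict Implicit.
Unset Printing Implicit Defensive.

(* The least absorbing extension of L is its closure under adjoining a
   generator element whose cell support is already covered; the defining
   property of absorbing lineages makes any of them closed, hence minimality.
   Inductively, a covered cell of level l is always covered by an element of L
   of level l, which is (i); it confines the new elements to finitely many
   boxes next to elements of L and gives (ii).  For (iii), start from the
   corner cell of psi, inside the support of some phi in L, and repeatedly pass
   to a child cell lying in the support of a child B-spline; since the levels of
   L are bounded, this leaves L, i.e. reaches the generator of L. *)

Lemma chB_mono {d} n m (A B : bset d) :
  subset_b A B -> subset_b (chB n m A) (chB n m B).
Proof. by move=> AB x [y /AB Ay yx]; exists y. Qed.

Lemma suppS_mono {d} m (A B : bset d) :
  subset_b A B -> subset_c (suppS m A) (suppS m B).
Proof. by move=> AB x [y /AB By yx]; exists y. Qed.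

Lemma finite_set_sub {d} (A B : bset d) :
  subset_b A B -> finite_set B -> finite_set A.
Proof. by move=> AB [s hs]; exists s => x /AB /hs. Qed.

Lemma finite_setU {d} (A B : bset d) :
  finite_set A -> finite_set B -> finite_set (fun x => A x \/ B x).
Proof.
move=> [s hs] [t ht]; exists (s ++ t) => x.
by case=> [/hs|/ht] hx; rewrite mem_cat hx ?orbT.
Qed.

Lemma finite_levels_bounded {d} (S : bset d) :
  finite_set S -> exists N, forall phi, S phi -> (level phi < N)%N.
Proof.
move=> [s hs]; exists (\max_(x <- s) level x).+1 => phi /hs phi_s.
by rewrite ltnS; apply: leq_bigmax_seq.
Qed.

Definition corner_cell {d} (phi : bspline d) : cell d := phi.

Lemma supp_corner_cell {d} m (phi : bspline d) : supp m phi (corner_cell phi).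
Proof. by split=> // j; rewrite lexx lerDl. Qed.

Definition box {d} m (psi : bspline d) : seq (bspline d) :=
  [seq (psi.1, [ffun j => psi.2 j + (nat_of_ord (f j))%:Z])
  | f : {ffun 'I_d -> 'I_m} <- enum {ffun 'I_d -> 'I_m}].

Lemma mem_box {d} m (psi phi : bspline d) :
  (0 < m)%N -> supp m psi (corner_cell phi) -> phi \in box m psi.
Proof.
case: m => // m' _ [lvl near]; apply/mapP.
exists [ffun j => inord (absz (phi.2 j - psi.2 j)) : 'I_m'.+1].
  by rewrite mem_enum.
case: phi lvl near => l v /= -> near; congr pair; apply/ffunP => j.
by rewrite !ffunE inordK; have /= := near j; lia.
Qed.

Lemma finite_corner_covered {d} m (S : bset d) : (0 < m)%N ->
  finite_set S -> finite_set (fun phi => suppS m S (corner_cell phi)).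
Proof.
move=> m_gt0 [s hs]; exists (flatten [seq box m psi | psi <- s]).
move=> phi [psi /hs psi_s covered]; apply/flatten_mapP; exists psi => //.
exact: mem_box.
Qed.

Lemma is_depth_same_levels {d} (A B : bset d) D :
  (forall l, (exists phi, at_level A l phi) -> exists phi, at_level B l phi) ->
  (forall l, (exists phi, at_level B l phi) -> exists phi, at_level A l phi) ->
  is_depth A D -> is_depth B D.
Proof.
move=> AB BA [noA allA]; split=> [phi BDphi|l /allA /AB //].
by have [psi /noA] := BA D (ex_intro _ phi BDphi).
Qed.

Lemma bchild_supp_cchild {d} n m (phi : bspline d) (J : cell d) : (0 < n)%N ->
  supp m phi J ->
  exists phi' J', [/\ bchild n m phi phi', cchild n J J' & supp m phi' J'].
Proof.
move=> n_gt0 [lvl near].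
exists (phi.1.+1, [ffun j => n%:Z * J.2 j - (J.2 j - phi.2 j)]).
exists (J.1.+1, [ffun j => n%:Z * J.2 j]).
split; split=> //=; last 2 first; first by rewrite lvl.
all: by move=> j; rewrite !ffunE; have := near j; nia.
Qed.

Lemma descend_to_gen {d} n m (L : bset d) : (0 < n)%N -> finite_set L ->
  forall phi J, L phi -> supp m phi J ->
  exists k phi' J', [/\ gen n m L phi', supp m phi' J' & chk n k.+1 J J'].
Proof.
move=> n_gt0 /finite_levels_bounded [N hN] phi J.
suff: forall t phi J, (N <= t + level phi)%N -> L phi -> supp m phi J ->
    exists k phi' J', [/\ gen n m L phi', supp m phi' J' & chk n k.+1 J J'].
  by move=> descend; apply: (descend (N - level phi)%N); lia.
elim=> [|t IH] {}phi {}J lvl Lphi suppJ; first by have := hN _ Lphi; lia.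
have [phi' [J' [child cchildJ suppJ']]] := bchild_supp_cchild n_gt0 suppJ.
case: (classic (L phi')) => [Lphi'|notLphi'].
  have [|k [phi'' [J'' [gen'' supp'' chk'']]]] := IH phi' J' _ Lphi' suppJ'.
    by rewrite /level child.1 addnS.
  by exists k.+1, phi'', J''; split=> //; exists J'.
exists 0%N, phi', J'; split=> //; last by exists J'.
by split=> //; right; exists phi.
Qed.

Lemma Ov_descendant {d} n m k (psi phi : bspline d) (H : bset d)
    (I J : cell d) :
  supp m psi I -> chk n k.+1 I J -> supp m phi J -> H phi ->
  Ov n m psi (Posz k.+1) H phi.
Proof.
move=> suppI chkIJ suppJ Hphi; split=> //; exists I => //.
by rewrite /suppk -NegzE; exists J.
Qed.

Section AbsorbingClosure.

Variables (d n m : nat) (L : bset d).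

Definition absorption_closed (P : bset d) : Prop :=
  subset_b L P /\ forall phi, B0 m phi \/ chB n m P phi ->
    subset_c (supp m phi) (suppS m P) -> P phi.

Definition absorbing_closure : bset d :=
  fun phi => forall P, absorption_closed P -> P phi.

Local Notation Lt := absorbing_closure.

Lemma sub_closure : subset_b L Lt.
Proof. by move=> x Lx P [LP _]; apply: LP. Qed.

Lemma closure_min (P : bset d) : absorption_closed P -> subset_b Lt P.
Proof. by move=> closedP x; apply. Qed.

Lemma closure_step phi : B0 m phi \/ chB n m Lt phi ->
  subset_c (supp m phi) (suppS m Lt) -> Lt phi.
Proof.
move=> born covered P closedP; have LtP := closure_min closedP.
apply: closedP.2.
  by case: born => [?|born]; [left | right; exact: (chB_mono LtP born)].
by move=> I /covered; apply: suppS_mono.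
Qed.

Lemma closure_ind (P : bset d) : subset_b L P ->
  (forall phi, B0 m phi \/ chB n m (fun x => Lt x /\ P x) phi ->
     subset_c (supp m phi) (suppS m (fun x => Lt x /\ P x)) -> P phi) ->
  subset_b Lt P.
Proof.
move=> LP step phi Ltphi; suff [] : Lt phi /\ P phi by [].
apply: (Ltphi (fun x => Lt x /\ P x)); split=> [x Lx|x born covered].
  by split; [exact: sub_closure | exact: LP].
split; last exact: step.
apply: closure_step; last by move=> I /covered; apply: suppS_mono => y [].
by case: born => [?|born]; [left | right; move: born; apply: chB_mono => y []].
Qed.

Lemma closure_covered phi : Lt phi ->
  L phi \/ subset_c (supp m phi) (suppS m (at_level L (level phi))).
Proof.
apply: (@closure_ind (fun phi =>
  L phi \/ subset_c (supp m phi) (suppS m (at_level L (level phi)))))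
  => [x|x _ covered]; first by left.
right=> I suppI; have [y [_ [Ly|coveredy]] suppyI] := covered I suppI.
  by exists y => //; split; rewrite // /level -suppyI.1 suppI.1.
have [z [Lz lvlz] suppzI] := coveredy I suppyI.
by exists z => //; split; rewrite // lvlz /level -suppyI.1 suppI.1.
Qed.

Lemma closure_finite : (0 < m)%N -> finite_set L -> finite_set Lt.
Proof.
move=> m_gt0 finL.
apply: (@finite_set_sub _ _ (fun phi => L phi \/ suppS m L (corner_cell phi))).
  move=> phi /closure_covered [Lphi|covered]; first by left.
  have [y [Ly _] suppy] := covered _ (supp_corner_cell m phi).
  by right; exists y.
by apply: finite_setU => //; exact: finite_corner_covered.
Qed.

Lemma closure_lineage : (0 < m)%N -> lineage n m L -> lineage n m Lt.
Proof.
move=> m_gt0 [finL bornL]; split; first exact: closure_finite.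
apply: (@closure_ind (fun phi => B0 m phi \/ chB n m Lt phi))
  => [x /bornL [?|born]|x born _]; first by left.
  by right; exact: (chB_mono sub_closure born).
by case: born => [?|born]; [left | right; move: born; apply: chB_mono => y []].
Qed.

Lemma closure_absorbing : absorbing n m Lt.
Proof.
by move=> [phi [[born notLt] covered]]; apply: notLt; apply: closure_step.
Qed.

Lemma closure_least (Ls : bset d) :
  subset_b L Ls -> absorbing n m Ls -> subset_b Lt Ls.
Proof.
move=> LLs absLs; apply: closure_min; split=> // phi born covered.
by apply: NNPP => notLs; apply: absLs; exists phi.
Qed.

Lemma closure_level l :
  (exists phi, at_level Lt l phi) -> exists phi, at_level L l phi.
Proof.
case=> phi [/closure_covered [Lphi|covered] lvl]; first by exists phi.
have [y [Ly lvly] _] := covered _ (supp_corner_cell m phi).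
by exists y; split; rewrite // lvly.
Qed.

Lemma closure_depth D : is_depth Lt D <-> is_depth L D.
Proof.
split; apply: is_depth_same_levels => l; try exact: closure_level.
all: by case=> phi [Lphi lvl]; exists phi; split=> //; apply: sub_closure.
Qed.

Lemma closure_new_meets_gen psi :
  (0 < n)%N -> finite_set L -> Lt psi -> ~ L psi ->
  exists k : int, 0 < k /\ exists phi, Ov n m psi k (gen n m L) phi.
Proof.
move=> n_gt0 finL /closure_covered [//|covered] _.
have [phi0 [Lphi0 _] supp0] := covered _ (supp_corner_cell m psi).
have [k [phi [J [genphi suppJ chkJ]]]] := descend_to_gen n_gt0 finL Lphi0 supp0.
exists (Posz k.+1); split=> //; exists phi.
exact: Ov_descendant (supp_corner_cell m psi) chkJ suppJ genphi.
Qed.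

End AbsorbingClosure.

Theorem lemma6p10 (d n m : nat) (hd : (1 <= d)%N) (hn : (2 <= n)%N)
    (hm : (2 <= m)%N) (L : bset d) :
  lineage n m L ->
  exists Lt : bset d,
    lineage n m Lt /\ subset_b L Lt /\ absorbing n m Lt /\
        (* least among absorbing generators whose lineage contains L *)
        (forall Ls : bset d, lineage n m Ls -> subset_b L Ls ->
           absorbing n m Ls -> subset_b Lt Ls) /\
        (* (i) *)
        (forall psi, Lt psi -> ~ L psi ->
           subset_c (supp m psi) (suppS m (at_level L (level psi)))) /\
        (* (ii) *)
        (forall D, is_depth Lt D <-> is_depth L D) /\
        (* (iii) *)
        (forall psi, Lt psi -> ~ L psi ->
           exists k : int, 0 < k /\ exists phi, Ov n m psi k (gen n m L) phi).
Proof.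
move=> linL.
have n_gt0 : (0 < n)%N by lia.
have m_gt0 : (0 < m)%N by lia.
exists (absorbing_closure n m L).
split; first exact: closure_lineage.
split; first exact: sub_closure.
split; first exact: closure_absorbing.
split; first by move=> Ls _; apply: closure_least.
split; first by move=> psi /closure_covered [Lpsi /(_ Lpsi)|].
split; first exact: closure_depth.
by move=> psi; apply: closure_new_meets_gen => //; case: linL.
Qed.
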